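(* Let $K,D,U$ be integers with $0\le U\le D$ and $U+D\le K-2$, and let $\mathbb{F}_q$ be any finite field. Consider the two-sided single unicast index coding problem with $K$ messages and $K$ receivers, where $R_k$ wants $x_k$ and has side-information $\{x_{k-U},\dots,x_{k-1}\}\cup\{x_{k+1},\dots,x_{k+D}\}$ (indices modulo $K$). Let $a=\gcd(K,D-U,U+1)$, $u_a=\frac{U+1}{a}$, $\Delta_a=\frac{D-U}{a}$, $K_a=\frac{K}{a}$, and let each message be $x_k=(x_{k,1},\dots,x_{k,u_a})\in\mathbb{F}_q^{u_a}$. Let $\mathbf{L}$ be the AIR matrix of size $K_a\times(K_a-\Delta_a)$ with rows $L_0,\dots,L_{K_a-1}$ (row indices taken modulo $K_a$). For $s\in[0:K_a-1]$ let $\mathbf{V}_s$ be the $u_a\times(K_a-\Delta_a)$ matrix with rows $L_s,L_{s+1},\dots,L_{s+u_a-1}$, let $\tilde{\mathbf{V}}_s$ be the $(au_a)\times(K_a-\Delta_a)$ matrix consisting of $a$ copies of $\mathbf{V}_s$ stacked vertically, and let $\mathbf{L}^{(2s)}$ be the $Ku_a\times(K_a-\Delta_a)$ matrix obtained by stacking $\tilde{\mathbf{V}}_0,\tilde{\mathbf{V}}_1,\dots,\tilde{\mathbf{V}}_{K_a-1}$ vertically. Then $\mathbf{L}^{(2s)}$ is an encoding matrix of an optimal length $u_a$-dimensional vector linear index code for this problem: with $\mathbf{x}=[x_{0,1}\,\cdots\,x_{0,u_a}\;x_{1,1}\,\cdots\,x_{1,u_a}\;\cdots\;x_{K-1,1}\,\cdots\,x_{K-1,u_a}]$,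 the broadcast symbols $[c_0\,\cdots\,c_{K_a-\Delta_a-1}]=\mathbf{x}\mathbf{L}^{(2s)}$ allow every receiver $R_k$ to decode $x_k$ from them and its side-information, and the code has rate $\frac{U+1}{K-D+U}$, equal to the symmetric capacity.
   Context: Index coding: a $p$-dimensional vector linear index code of length $N$ maps the messages $x_k\in\mathbb{F}_q^p$ linearly to $N$ broadcast symbols; receiver $R_k$ must recover $x_k$ from the broadcast symbols and its side-information; rate is $p/N$. For this problem (with $U+D\le K-2$) the symmetric capacity is $\frac{U+1}{K-D+U}$, and optimal length means rate equal to capacity. AIR matrix: for integers $m\ge n\ge1$, the binary $m\times n$ matrix built by: letting $\mathbf{I}_{c\times d}$ ($d\mid c$) be $c/d$ copies of $\mathbf{I}_d$ stacked vertically; starting with an empty $m\times n$ matrix whose unfilled part is everything; Step 1: $m=qn+r$, $0\le r<n$, fill the first $qn$ rows of the unfilled part with $\mathbf{I}_{qn\times n}$, unfilled part becomes the last $r$ rows, stop if $r=0$; Step 2: $n=q'r+r'$, $0\le r'<r$, fill the first $q'r$ columns of the unfilled part with $q'$ copies of $\mathbf{I}_r$ placed side by side, unfilled part becomes its last $r'$ columns, stop if $r'=0$, else set $m\leftarrow r$, $n\leftarrow r'$ and go to Step 1. *)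

From mathcomp Require Import all_boot all_order all_algebra.
Set Implicit Arguments. Unset Strict Implicit. Unset Printing Implicit Defensive.
Import GRing.Theory.

(* ---------- AIR matrix ---------------------------------------------------
   air_rec fuel m n i j = entry (i, j) (0-indexed) of the m x n AIR matrix,
   following the recursive construction literally:
   Step 1: m = q n + r; first q n rows are q stacked copies of I_n
           (entry (i,j) = [i mod n == j]); remaining part = last r rows.
   Step 2: n = q' r + r'; first q' r columns of the remaining r x n part are
           q' copies of I_r side by side (entry (i',j) = [i' == j mod r]);
           remaining part = last r' columns; recurse with (m,n) := (r,r').
   [fuel] bounds the recursion depth (n strictly decreases). *)
Fixpoint air_rec (fuel m n i j : nat) : bool :=
  match fuel with
  | 0 => false
  | fuel'.+1 =>
    if n == 0 then false else
    let q := m %/ n in let r := m %% n in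
    if i < q * n then i %% n == j
    else
      let i' := i - q * n in
      if r == 0 then false else
      let q' := n %/ r in let r' := n %% r in
      if j < q' * r then i' == j %% r
      else air_rec fuel' r r' i' (j - q' * r)
  end.

Definition air_entry (m n i j : nat) : bool := air_rec (m + n).+1 m n i j.

Definition air_mx (R : pzRingType) (m n : nat) : 'M[R]_(m, n) :=
  \matrix_(i < m, j < n) (if air_entry m n i j then 1%R else 0%R).

Definition a_par (K D U : nat) : nat := gcdn K (gcdn (D - U) U.+1).
Definition ua (K D U : nat) : nat := U.+1 %/ a_par K D U.
Definition Da (K D U : nat) : nat := (D - U) %/ a_par K D U.
Definition Ka (K D U : nat) : nat := K %/ a_par K D U.
Definition Ncode (K D U : nat) : nat := Ka K D U - Da K D U.

(* ---------- the encoding matrix L^(2s) ----------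
   Row r of L^(2s) (0-indexed, r < K u_a): the rows are the blocks
   V~_0, ..., V~_{K_a-1}, each of a*u_a rows, V~_s = a copies of V_s,
   V_s = rows L_s, ..., L_{s+u_a-1} of L (indices mod K_a).
   Hence row r = L_{(s + t mod u_a) mod K_a} with s = r / (a u_a),
   t = r mod (a u_a). *)
Definition L2s (R : pzRingType) (K D U : nat) : 'M[R]_(K * ua K D U, Ncode K D U) :=
  \matrix_(r < K * ua K D U, j < Ncode K D U)
    (let au := a_par K D U * ua K D U in
     let s := r %/ au in let t := r %% au in
     if air_entry (Ka K D U) (Ncode K D U) ((s + t %% ua K D U) %% Ka K D U) j
     then 1%R else 0%R).

Definition side (K U D k j : nat) : bool :=
  has (fun d => j == (k + K - d) %% K) (iota 1 U)
  || has (fun d => j == (k + d) %% K) (iota 1 D).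

(* Messages are the rows of X : 'M_(K, p) (row k = x_k in F^p); the
   concatenated message vector x = [x_0 x_1 ... x_{K-1}] is mxvec X. *)
Definition side_info (R : pzRingType) (K U D p : nat) (k : 'I_K)
  (X : 'M[R]_(K, p)) : 'M[R]_(K, p) :=
  \matrix_(j < K, l < p) (if side K U D k j then X j l else 0%R).

Definition decodable (R : pzRingType) (K U D p N : nat)
  (L : 'M[R]_(K * p, N)) (k : 'I_K) : Prop :=
  exists dec : 'rV[R]_N -> 'M[R]_(K, p) -> 'rV[R]_p,
    forall X : 'M[R]_(K, p), dec (mxvec X *m L)%R (side_info U D k X) = row k X.

From mathcomp Require Import all_boot all_order all_algebra.
From mathcomp Require Import zify.

(* Any [N] cyclically consecutive rows of the [K_a x N] AIR matrix are linearly
   independent, over any ring.  This follows the Euclidean algorithm that builds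
   the matrix: its top rows are stacked identities and its bottom rows form the
   transpose of a smaller AIR matrix, so every such window (and every bottom-right
   corner) is block triangular, with identity blocks and a window or corner of the
   smaller AIR matrix.
   Receiver [R_k] misses exactly the messages [x_j] with [j - k] in [(D, K - U)]
   modulo [K].  The symbol [x_{j,l}] is carried by row [(j/a + l) mod K_a] of the
   AIR matrix.  The rows carrying unknown symbols all lie in the window of
   [N = K_a - Delta_a] rows starting at [k/a + u_a + Delta_a], and the symbols of
   [x_k] are alone on its last [u_a] rows.  Independence of the window thus
   determines [x_k]. *)

Set Implicit Arguments. Unset Strict Implicit. Unset Printing Implicit Defensive.
Import GRing.Theory Num.Theory.

(** * The AIR matrix *)

Lemma air_rec_fuel f1 f2 m n i j : n < f1 -> n < f2 ->
  air_rec f1 m n i j = air_rec f2 m n i j.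
Proof.
elim: f1 f2 m n i j => [|f1 IH] [|f2] m n i j //= lt_n_f1 lt_n_f2.
case: eqP => // /eqP n_neq0; case: ifP => // _.
case: eqP => // /eqP r_neq0; case: ifP => // _.
have lt_r_n : m %% n < n by rewrite ltn_pmod // lt0n.
have lt_r'_r : n %% (m %% n) < m %% n by rewrite ltn_pmod // lt0n.
by apply: IH; lia.
Qed.

(* With fuel [n.+1] the recursive call of [air_rec] is again an instance of [air]. *)
Definition air m n i j := air_rec n.+1 m n i j.

Lemma air_entryE m n i j : air_entry m n i j = air m n i j.
Proof. by apply: air_rec_fuel; lia. Qed.

Lemma air_step m n i j : 0 < n ->
  air m n i j = if i < m %/ n * n then i %% n == j
                else (0 < m %% n) && air n (m %% n) j (i - m %/ n * n).
Proof.
elim/ltn_ind: n m i j => n IH m i j n_gt0.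
rewrite /air /= (_ : (n == 0) = false); last by lia.
case: ifP => // _; set r := m %% n; set i' := i - _.
case: eqP => [-> //|/eqP r_neq0].
have r_gt0 : 0 < r by lia.
rewrite r_gt0 /=; case: ifP => [_|_]; first by rewrite eq_sym.
set r' := n %% r.
have lt_r_n : r < n by rewrite ltn_pmod.
have lt_r'_r : r' < r by rewrite ltn_pmod // lt0n.
set j' := j - _.
rewrite (@air_rec_fuel _ r'.+1) -/(air r r' _ _); [|lia..].
case: eqP => [-> //|/eqP r'_neq0].
rewrite IH; [|lia|lia]; case: ifP => [_|_]; first by rewrite eq_sym.
have lt_r''_r' : r %% r' < r' by rewrite ltn_pmod // lt0n.
rewrite (@air_rec_fuel _ (r %% r').+1) -/(air r' _ _ _); [|lia..].
by case: (posnP (r %% r')) => [->|].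
Qed.

(** * Cyclic windows *)

Definition cyc_window m n p := [seq (p + t) %% m | t <- iota 0 n].

Lemma iota_addn p n : iota p n = map (addn p) (iota 0 n).
Proof. by rewrite -iotaDl addn0. Qed.

Lemma cyc_window_nowrap m n p : p + n <= m -> cyc_window m n p = iota p n.
Proof.
move=> le_pn_m; rewrite [RHS]iota_addn; apply/eq_in_map => t.
by rewrite mem_iota => t_lt; rewrite modn_small //; lia.
Qed.

Lemma cyc_window_wrap m n p : p < m -> n <= m -> m < p + n ->
  cyc_window m n p = iota p (m - p) ++ iota 0 (p + n - m).
Proof.
move=> lt_p_m le_n_m wraps; rewrite /cyc_window; set k := p + n - m.
rewrite (_ : n = m - p + k); last by lia.
rewrite iotaD map_cat add0n; congr (_ ++ _).
  by rewrite [RHS]iota_addn; apply/eq_in_map => t; rewrite mem_iota => t_lt; rewrite modn_small //; lia.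
rewrite iota_addn -map_comp -[RHS]map_id; apply/eq_in_map => t; rewrite mem_iota => t_lt /=.
by rewrite addnA subnKC ?modnDl ?modn_small; lia.
Qed.

Lemma uniq_cyc_window m n p : n <= m -> uniq (cyc_window m n p).
Proof.
move=> le_n_m; rewrite map_inj_in_uniq ?iota_uniq // => t t'.
by rewrite !mem_iota => t_lt t'_lt /eqP; rewrite eqn_modDl !modn_small; lia.
Qed.

Lemma mem_cyc_window m n p t : t < n -> (p + t) %% m \in cyc_window m n p.
Proof. by move=> lt_t; apply: map_f; rewrite mem_iota. Qed.

Lemma map_mod_iota k n a l : k * n <= a -> a + l <= k.+1 * n ->
  map (modn^~ n) (iota a l) = iota (a - k * n) l.
Proof.
move=> lo hi; rewrite -{1}(subnKC lo) iotaDl -map_comp -[RHS]map_id.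
apply/eq_in_map => x; rewrite mem_iota => x_lt /=.
by rewrite modnMDl modn_small //; move: hi; rewrite mulSn; lia.
Qed.

Lemma map_mod_cyc_window m n p : n %| m ->
  map (modn^~ n) (cyc_window m n p) = cyc_window n n p.
Proof. by move=> dvd_nm; rewrite -map_comp; apply/eq_map => t /=; rewrite modn_dvdm. Qed.

Ltac uniq_iotas :=
  rewrite ?cat_uniq ?iota_uniq ?andbT //=;
  repeat (apply/andP; split); apply/hasPn => x; rewrite ?mem_cat ?mem_iota /= => ?; lia.

Ltac perm_iotas :=
  apply: uniq_perm; [uniq_iotas | uniq_iotas | move=> x; rewrite ?mem_cat ?mem_iota ?in_nil; lia].

(** * Free blocks *)

Lemma map_uniq_inj_in (T T' : eqType) (f : T -> T') (s : seq T) :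
  uniq (map f s) -> {in s &, injective f}.
Proof.
elim: s => [|x s IH] //= /andP[fx_notin uniq_fs] y z.
rewrite !in_cons => /predU1P[->|ys] /predU1P[->|zs] // eq_f.
- by move: fx_notin; rewrite eq_f map_f.
- by move: fx_notin; rewrite -eq_f map_f.
- exact: IH.
Qed.

Section FreeRows.
Variable R : pzRingType.
Implicit Types (M : nat -> nat -> R) (S J : seq nat).
Local Open Scope ring_scope.

Definition rows_free M S J := forall c : nat -> R,
  (forall j, j \in J -> \sum_(i <- S) c i * M i j = 0) -> forall i, i \in S -> c i = 0.

Definition cols_free M S J := rows_free (fun j i => M i j) J S.

(* Columns are tracked too because the bottom of an AIR matrix is a transposed
   AIR matrix. *)
Definition free_block M S J := rows_free M S J /\ cols_free M S J.

Definition unit_col M S i j := forall i', i' \in S -> M i' j = (i' == i)%:R.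

Lemma rows_free_perm M S S' J J' : perm_eq S S' -> J =i J' ->
  rows_free M S J -> rows_free M S' J'.
Proof.
move=> eqSS' eqJJ' freeS c c_eq0 i iS'.
apply: (freeS c); last by rewrite (perm_mem eqSS').
by move=> j jJ; rewrite (perm_big _ eqSS') c_eq0 // -eqJJ'.
Qed.

Lemma eq_in_rows_free M M' S J : {in S & J, forall i j, M i j = M' i j} ->
  rows_free M S J -> rows_free M' S J.
Proof.
move=> eqMM' freeM c c_eq0; apply: freeM => j jJ.
by rewrite -[RHS](c_eq0 j jJ) !big_seq; apply: eq_bigr => i iS; rewrite eqMM'.
Qed.

Lemma rows_free_map_row M f S J :
  rows_free (fun i j => M (f i) j) S J -> rows_free M (map f S) J.
Proof.
move=> freeM c c_eq0 _ /mapP[i iS ->]; apply: (freeM (c \o f)) => // j jJ.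
by rewrite -[RHS](c_eq0 j jJ) big_map.
Qed.

Lemma rows_free_map_col M f S J :
  rows_free (fun i j => M i (f j)) S J -> rows_free M S (map f J).
Proof. by move=> freeM c c_eq0; apply: freeM => j jJ; apply/c_eq0/map_f. Qed.

Lemma sum_unit_col M S (c : nat -> R) i j : uniq S -> i \in S -> unit_col M S i j ->
  \sum_(i' <- S) c i' * M i' j = c i.
Proof.
move=> uniqS iS col_ij; rewrite (bigD1_seq i) //= col_ij // eqxx mulr1.
rewrite big_seq_cond big1 ?addr0 // => i' /andP[i'S /negbTE i'_neq_i].
by rewrite col_ij // i'_neq_i mulr0.
Qed.

Lemma rows_free_cat_pivots M S1 S2 J J2 : uniq (S1 ++ S2) ->
  (forall i, i \in S1 -> exists2 j, j \in J & unit_col M (S1 ++ S2) i j) ->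
  {subset J2 <= J} -> rows_free M S2 J2 -> rows_free M (S1 ++ S2) J.
Proof.
move=> uniqS pivots subJ freeS2 c c_eq0.
have c1_eq0 i : i \in S1 -> c i = 0.
  move=> iS1; have [j jJ col_ij] := pivots i iS1.
  by rewrite -(sum_unit_col c uniqS _ col_ij) ?c_eq0 // mem_cat iS1.
have c2_eq0 : forall i, i \in S2 -> c i = 0.
  apply: freeS2 => j jJ2; rewrite -[RHS](c_eq0 j (subJ j jJ2)) big_cat /=.
  by rewrite [X in _ = X + _]big_seq [X in _ = X + _]big1 ?add0r // => i iS1; rewrite c1_eq0 ?mul0r.
by move=> i; rewrite mem_cat => /orP[]; [apply: c1_eq0|apply: c2_eq0].
Qed.

Lemma rows_free_cat_pivots_zero M S1 S2 J J2 : uniq S1 ->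
  (forall i, i \in S1 -> exists2 j, j \in J & unit_col M S1 i j) ->
  {subset J2 <= J} -> {in S1 & J2, forall i j, M i j = 0} ->
  rows_free M S2 J2 -> rows_free M (S1 ++ S2) J.
Proof.
move=> uniqS1 pivots subJ S1J2_eq0 freeS2 c c_eq0.
have c2_eq0 : forall i, i \in S2 -> c i = 0.
  apply: freeS2 => j jJ2; rewrite -[RHS](c_eq0 j (subJ j jJ2)) big_cat /=.
  by rewrite [X in _ = X + _]big_seq [X in _ = X + _]big1 ?add0r // => i iS1; rewrite S1J2_eq0 ?mulr0.
move=> i; rewrite mem_cat => /orP[iS1|]; last exact: c2_eq0.
have [j jJ col_ij] := pivots i iS1.
rewrite -(sum_unit_col c uniqS1 iS1 col_ij) -[RHS](c_eq0 j jJ) big_cat /=.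
by rewrite [X in _ = _ + X]big_seq [X in _ = _ + X]big1 ?addr0 // => i' i'S2; rewrite c2_eq0 ?mul0r.
Qed.

Lemma rows_free_collect (I : finType) M S J (rho : I -> nat) (y : I -> R) i0 :
  uniq S -> rows_free M S J ->
  (forall i, rho i \notin S -> y i = 0) ->
  (forall i, i != i0 -> rho i = rho i0 -> y i = 0) -> rho i0 \in S ->
  (forall j, j \in J -> \sum_i y i * M (rho i) j = 0) -> y i0 = 0.
Proof.
move=> uniqS freeS y_out y_alone i0S y_comb.
pose c r := \sum_i (if rho i == r then y i else 0).
have c_eq0 : forall r, r \in S -> c r = 0.
  apply: freeS => j jJ; rewrite -[RHS](y_comb j jJ).
  under eq_bigr do rewrite mulr_suml.
  rewrite exchange_big; apply: eq_bigr => i _ /=.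
  have [iS|iS] := boolP (rho i \in S); last first.
    by rewrite y_out // mul0r big1 // => r _; rewrite if_same mul0r.
  rewrite (bigD1_seq (rho i)) //= eqxx big_seq_cond big1 ?addr0 // => r /andP[_ r_neq].
  by rewrite eq_sym (negbTE r_neq) mul0r.
rewrite -(c_eq0 _ i0S) /c (bigD1 i0) //= eqxx big1 ?addr0 // => i i_neq.
by case: eqP => // /(y_alone _ i_neq).
Qed.

Lemma free_block_nil M : free_block M [::] [::].
Proof. by []. Qed.

Lemma free_block_id M S : uniq S ->
  {in S &, forall i j, M i j = (i == j)%:R} -> free_block M S S.
Proof.
move=> uniqS M_id; split; rewrite -[S]cats0;
  apply: (@rows_free_cat_pivots _ _ [::] _ [::]) => //; rewrite ?cats0 //.
- by move=> i iS; exists i => // i' i'S; rewrite M_id.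
- by move=> i iS; exists i => // i' i'S; rewrite M_id // eq_sym.
Qed.

End FreeRows.

(** * Free blocks of the AIR matrix *)

Section AirBlocks.
Variable R : pzRingType.

Definition air_fun m n : nat -> nat -> R := fun i j => (air m n i j)%:R%R.

Lemma air_fun_top m n i j : 0 < n -> i < m %/ n * n ->
  air_fun m n i j = (i %% n == j)%N%:R%R.
Proof. by move=> n_gt0 i_top; rewrite /air_fun air_step // i_top. Qed.

Lemma air_fun_bottom m n i j : 0 < n -> 0 < m %% n ->
  air_fun m n (m %/ n * n + i) j = air_fun n (m %% n) j i.
Proof.
move=> n_gt0 r_gt0; rewrite /air_fun air_step // r_gt0 addKn.
by rewrite ltnNge leq_addr.
Qed.

Lemma free_block_air_split m n (S1 S' J L Jc T : seq nat) : 0 < n ->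
  {in S1, forall i, i < m %/ n * n} ->
  map (modn^~ n) S1 = L -> uniq J -> perm_eq (L ++ Jc) J ->
  free_block (fun i j => air_fun m n (m %/ n * n + i) j) S' Jc ->
  perm_eq (S1 ++ map (addn (m %/ n * n)) S') T ->
  free_block (air_fun m n) T J.
Proof.
move=> n_gt0 S1_top S1L uniqJ permJ [bot_rows bot_cols] permT.
have uniqLJc : uniq (L ++ Jc) by rewrite (perm_uniq permJ).
have eqJ : J =i L ++ Jc by move=> j; rewrite (perm_mem permJ).
have uniqL : uniq L by move: uniqLJc; rewrite cat_uniq => /andP[].
have uniqS1 : uniq S1 by apply: (map_uniq (f := modn^~ n)); rewrite S1L.
have eq_mod : {in S1 &, forall i i', (i %% n == i' %% n) = (i == i')}.
  move=> i i' iS1 i'S1; apply/eqP/eqP => [|-> //].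
  by apply: (@map_uniq_inj_in _ _ (modn^~ n) S1); rewrite ?S1L.
have modS1_L i : i \in S1 -> i %% n \in L by move=> iS1; rewrite -S1L (map_f (modn^~ n)).
have L_Jc j : j \in L -> j \in Jc -> False.
  by move=> jL jJc; move: uniqLJc; rewrite cat_uniq => /and3P[_ /hasP[]]; exists j.
split.
- apply: rows_free_perm permT (frefl _) _.
  apply: (@rows_free_cat_pivots_zero _ _ _ _ _ Jc) => //.
  + move=> i iS1; exists (i %% n); first by rewrite eqJ mem_cat modS1_L.
    by move=> i' i'S1; rewrite air_fun_top ?S1_top ?eq_mod.
  + by move=> j jJc; rewrite eqJ mem_cat jJc orbT.
  + move=> i j iS1 jJc; rewrite air_fun_top ?S1_top //.
    by case: eqP => // modi; case: (L_Jc j) => //; rewrite -modi modS1_L.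
  + exact: rows_free_map_row.
- set S := S1 ++ _ in permT.
  apply: (@rows_free_perm _ _ (L ++ Jc) _ S); [exact: permJ|exact: perm_mem|].
  apply: (@rows_free_cat_pivots _ _ _ _ _ (map (addn (m %/ n * n)) S')) => //.
  + move=> j; rewrite -S1L => /mapP[i iS1 ->]; exists i; first by rewrite mem_cat iS1.
    by move=> j' _; rewrite air_fun_top ?S1_top // eq_sym.
  + by move=> i iS'; rewrite mem_cat iS' orbT.
  + exact: rows_free_map_col.
Qed.

Lemma free_block_air_top m n S : 0 < n -> {in S, forall i, i < m %/ n * n} ->
  size S = n -> uniq (map (modn^~ n) S) -> free_block (air_fun m n) S (iota 0 n).
Proof.
move=> n_gt0 S_top size_S uniq_modS.
apply: (free_block_air_split (S' := [::]) n_gt0 S_top erefl (iota_uniq _ _) _ (free_block_nil _));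
  last by rewrite cats0.
rewrite cats0; apply: uniq_perm; rewrite ?iota_uniq //.
have [||//] := uniq_min_size uniq_modS (s2 := iota 0 n).
  by move=> _ /mapP[i _ ->]; rewrite mem_iota ltn_mod n_gt0.
by rewrite size_iota size_map size_S.
Qed.

Lemma free_block_air_topleft m n b : b <= n -> n <= m ->
  free_block (air_fun m n) (iota 0 b) (iota 0 b).
Proof.
move=> le_b_n le_n_m; apply: free_block_id (iota_uniq _ _) _ => i j /[!mem_iota] i_lt _.
have n_gt0 : 0 < n by lia.
have q_gt0 : 0 < m %/ n by rewrite divn_gt0.
by rewrite air_fun_top ?modn_small //; nia.
Qed.

Lemma free_block_air_bottom m n S J : 0 < n -> 0 < m %% n ->
  free_block (air_fun n (m %% n)) J S ->
  free_block (fun i j => air_fun m n (m %/ n * n + i) j) S J.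
Proof.
move=> n_gt0 r_gt0 [rows cols].
by split; [move: cols|move: rows]; apply: eq_in_rows_free => i j _ _ /=; rewrite air_fun_bottom.
Qed.

(* Windows alone do not carry the induction: a window starting in the bottom rows
   of [air m n] reduces to a corner of [air n (m %% n)], and a large corner to a
   window. *)
Definition windows_free (M : nat -> nat -> R) m n :=
  forall p, p < m -> free_block M (cyc_window m n p) (iota 0 n).

Definition corners_free (M : nat -> nat -> R) m n :=
  forall b, b <= n -> free_block M (iota (m - b) b) (iota (n - b) b).

Lemma air_free_blocks_dvd m n : 0 < n -> n <= m -> n %| m ->
  windows_free (air_fun m n) m n /\ corners_free (air_fun m n) m n.
Proof.
move=> n_gt0 le_n_m dvd_nm; have m_eq : m = m %/ n * n by rewrite divnK.
have q_gt0 : 0 < m %/ n by rewrite divn_gt0.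
split=> [p lt_p_m | b le_b_n].
  apply: free_block_air_top => //.
  - by move=> _ /mapP[t _ ->]; rewrite -m_eq ltn_mod; lia.
  - by rewrite size_map size_iota.
  - by rewrite map_mod_cyc_window // uniq_cyc_window.
apply: (free_block_air_split (S1 := iota (m - b) b) (S' := [::]) (L := iota (n - b) b) (Jc := [::])) => //.
- by move=> i; rewrite mem_iota -m_eq; lia.
- by rewrite (@map_mod_iota (m %/ n).-1); [congr iota| |]; nia.
- exact: iota_uniq.
- by rewrite cats0.
- by rewrite cats0.
Qed.

Section AirStep.
Variables q n r : nat.
Hypotheses (q_gt0 : 0 < q) (r_gt0 : 0 < r) (lt_r_n : r < n).
Local Notation m := (q * n + r).
Hypotheses (windows_nr : windows_free (air_fun n r) n r)
           (corners_nr : corners_free (air_fun n r) n r).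

Let n_gt0 : 0 < n. Proof. by lia. Qed.
Let le_n_qn : n <= q * n. Proof. by rewrite leq_pmull. Qed.
Let div_m : m %/ n = q. Proof. by rewrite divnMDl // divn_small ?addn0. Qed.
Let mod_m : m %% n = r. Proof. by rewrite modnMDl modn_small. Qed.

Let bottom_free S J : free_block (air_fun n r) J S ->
  free_block (fun i j => air_fun m n (m %/ n * n + i) j) S J.
Proof. by rewrite -{1}mod_m; apply: free_block_air_bottom; rewrite ?mod_m. Qed.

Lemma air_window_top p : p + n <= q * n ->
  free_block (air_fun m n) (cyc_window m n p) (iota 0 n).
Proof.
move=> le_pn_qn; rewrite cyc_window_nowrap; last by lia.
apply: free_block_air_top => //.
- by move=> i; rewrite div_m mem_iota; lia.
- by rewrite size_iota.
- by rewrite iota_addn -map_comp; apply: uniq_cyc_window.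
Qed.

Lemma air_window_bottom p : q * n <= p < m ->
  free_block (air_fun m n) (cyc_window m n p) (iota 0 n).
Proof.
move=> p_bot; move def_b: (m - p) => b.
apply: (free_block_air_split (S1 := iota 0 (n - b)) (S' := iota (r - b) b)
         (L := iota 0 (n - b)) (Jc := iota (n - b) b)) => //.
- by move=> i; rewrite div_m mem_iota; nia.
- by rewrite (@map_mod_iota 0) ?mul0n ?subn0 //; lia.
- exact: iota_uniq.
- by perm_iotas.
- by apply/bottom_free/corners_nr; lia.
- by rewrite div_m -iotaDl cyc_window_wrap; [perm_iotas|lia..].
Qed.

Lemma air_window_cross p : p < q * n < p + n -> p + n <= m ->
  free_block (air_fun m n) (cyc_window m n p) (iota 0 n).
Proof.
move=> p_cross le_pn_m; move def_b: (p + n - q * n) => b.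
apply: (free_block_air_split (S1 := iota p (q * n - p)) (S' := iota 0 b)
         (L := iota b (n - b)) (Jc := iota 0 b)) => //.
- by move=> i; rewrite div_m mem_iota; lia.
- by rewrite (@map_mod_iota q.-1); [congr iota| |]; nia.
- exact: iota_uniq.
- by perm_iotas.
- by apply/bottom_free/free_block_air_topleft; lia.
- by rewrite div_m -iotaDl cyc_window_nowrap //; perm_iotas.
Qed.

Lemma air_window_wrap p : p < q * n -> m < p + n ->
  free_block (air_fun m n) (cyc_window m n p) (iota 0 n).
Proof.
move=> p_top wraps; move def_h: (p + n - m) => h.
apply: (free_block_air_split (S1 := iota p (q * n - p) ++ iota 0 h) (S' := iota 0 r)
         (L := iota (h + r) (q * n - p) ++ iota 0 h) (Jc := iota h r)) => //.
- by move=> i; rewrite div_m mem_cat !mem_iota; nia.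
- rewrite map_cat (@map_mod_iota q.-1) ?(@map_mod_iota 0) ?mul0n ?subn0 //; try nia.
  by congr (iota _ _ ++ _); nia.
- exact: iota_uniq.
- by perm_iotas.
- apply/bottom_free; rewrite -(@cyc_window_nowrap n r h); last by lia.
  by apply: windows_nr; lia.
- by rewrite div_m -iotaDl cyc_window_wrap; [perm_iotas|nia..].
Qed.

Lemma air_corner_small b : b <= r ->
  free_block (air_fun m n) (iota (m - b) b) (iota (n - b) b).
Proof.
move=> le_b_r.
apply: (free_block_air_split (S1 := [::]) (S' := iota (r - b) b) (Jc := iota (n - b) b)) => //.
- exact: iota_uniq.
- by apply/bottom_free/corners_nr; lia.
- by rewrite div_m -iotaDl; perm_iotas.
Qed.

Lemma air_corner_large b : r < b <= n ->
  free_block (air_fun m n) (iota (m - b) b) (iota (n - b) b).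
Proof.
move=> b_large.
apply: (free_block_air_split (S1 := iota (m - b) (b - r)) (S' := iota 0 r)
         (L := iota (n + r - b) (b - r)) (Jc := iota (n - b) r)) => //.
- by move=> i; rewrite div_m mem_iota; lia.
- by rewrite (@map_mod_iota q.-1); [congr iota| |]; nia.
- exact: iota_uniq.
- by perm_iotas.
- apply/bottom_free; rewrite -(@cyc_window_nowrap n r (n - b)); last by lia.
  by apply: windows_nr; lia.
- by rewrite div_m -iotaDl; perm_iotas.
Qed.

Lemma air_free_blocks_step :
  windows_free (air_fun m n) m n /\ corners_free (air_fun m n) m n.
Proof.
split=> [p lt_p_m | b le_b_n].
  case: (leqP (p + n) (q * n)) => [|lt_qn_pn]; first exact: air_window_top.
  case: (leqP (q * n) p) => [le_qn_p|lt_p_qn]; first by apply: air_window_bottom; lia.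
  case: (leqP (p + n) m) => [le_pn_m|wraps]; last exact: air_window_wrap.
  by apply: air_window_cross; lia.
case: (leqP b r) => [|lt_r_b]; first exact: air_corner_small.
by apply: air_corner_large; lia.
Qed.

End AirStep.

Lemma air_free_blocks m n : 0 < n -> n <= m ->
  windows_free (air_fun m n) m n /\ corners_free (air_fun m n) m n.
Proof.
elim/ltn_ind: n m => n IH m n_gt0 le_n_m.
have [r_eq0|r_gt0] := posnP (m %% n).
  by apply: air_free_blocks_dvd => //; apply/eqP.
have lt_r_n := ltn_pmod m n_gt0.
have [windows corners] := IH (m %% n) lt_r_n n r_gt0 (ltnW lt_r_n).
by rewrite (divn_eq m n); apply: air_free_blocks_step; rewrite ?divn_gt0.
Qed.

End AirBlocks.

(** * Decoding *)

Lemma nth_allpairs_pair (A B : Type) (a0 : A) (b0 : B) (s : seq A) (t : seq B) i j :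
  i < size s -> j < size t ->
  nth (a0, b0) [seq (x, y) | x <- s, y <- t] (i * size t + j) = (nth a0 s i, nth b0 t j).
Proof.
elim: s i => [|x s IH] [|i] //= lt_i lt_j; rewrite nth_cat size_map.
  by rewrite lt_j (nth_map b0).
by rewrite mulSn -addnA ltnNge leq_addr /= addKn IH.
Qed.

Lemma mxvec_index_val m n (i : 'I_m) (j : 'I_n) : val (mxvec_index i j) = i * n + j.
Proof.
have size_enum : size (enum {: 'I_m * 'I_n}) = m * n by rewrite -cardE card_prod !card_ord.
have nth_enum : nth (i, j) (enum {: 'I_m * 'I_n}) (i * n + j) = (i, j).
  rewrite enumT unlock /= -[n in i * n](size_enum_ord n) nth_allpairs_pair ?size_enum_ord //.
  by rewrite !nth_ord_enum.
have lt_ij : i * n + j < size (enum {: 'I_m * 'I_n}).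
  by rewrite size_enum; have := ltn_ord i; have := ltn_ord j; nia.
have lt_rank : enum_rank (i, j) < size (enum {: 'I_m * 'I_n}) by rewrite -cardE.
apply/eqP; rewrite /= -(nth_uniq (i, j) lt_rank lt_ij (enum_uniq _)).
by rewrite nth_enum_rank nth_enum.
Qed.

Lemma mxvec_mulmx_entry (R : pzRingType) m n N (Y : 'M[R]_(m, n)) (L : 'M[R]_(m * n, N)) c :
  ((mxvec Y *m L) 0 c = \sum_(i : 'I_m * 'I_n) Y i.1 i.2 * L (mxvec_index i.1 i.2) c)%R.
Proof.
rewrite mxE (reindex (uncurry (@mxvec_index m n))) /=; last exact: curry_mxvec_bij.
by apply: eq_bigr => -[i j] _; rewrite mxvecE.
Qed.

Lemma divn_modn_block a u j l : 0 < a -> l < u ->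
  (j * u + l) %/ (a * u) = j %/ a /\ (j * u + l) %% (a * u) %% u = l.
Proof.
move=> a_gt0 lt_l_u.
have j_split : j * u + l = j %/ a * (a * u) + (j %% a * u + l).
  by rewrite {1}(divn_eq j a) mulnDl mulnA addnA.
have lt_rem : j %% a * u + l < a * u by have := ltn_pmod j a_gt0; nia.
rewrite j_split divnMDl ?(divn_small lt_rem) ?addn0; last by nia.
by rewrite modnMDl (modn_small lt_rem) modnMDl modn_small.
Qed.

Lemma eqn_modDl_small m p t t' : t < m -> t' < m ->
  ((p + t) %% m == (p + t') %% m) = (t == t').
Proof. by move=> lt_t lt_t'; rewrite eqn_modDl !modn_small. Qed.

Lemma nonside_offset K U D k j : U + D + 2 <= K -> k < K -> j < K -> j != k ->
  ~~ side K U D k j -> D < (j + K - k) %% K < K - U.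
Proof.
move=> le_K lt_k lt_j j_neq_k; rewrite /side negb_or => /andP[/hasPn left /hasPn right].
have j_eq : (k + (j + K - k) %% K) %% K = j.
  by rewrite modnDmr (_ : k + (j + K - k) = j + K) ?modnDr ?modn_small //; lia.
move: j_eq; set e := (j + K - k) %% K => j_eq.
have lt_e : e < K by rewrite ltn_pmod //; lia.
apply/andP; split; rewrite ltnNge; apply/negP => bad.
  have [e0|e_gt0] := posnP e; first by move: j_neq_k; rewrite -j_eq e0 addn0 modn_small ?eqxx.
  have e_in : e \in iota 1 D by rewrite mem_iota; lia.
  by move: (right e e_in); rewrite -j_eq eqxx.
have Ke_in : K - e \in iota 1 U by rewrite mem_iota; lia.
by move: (left _ Ke_in); rewrite (_ : k + K - (K - e) = k + e) ?j_eq ?eqxx //; lia.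
Qed.

Section Code.
Variables K D U : nat.
Hypotheses (le_U_D : U <= D) (le_UD_K : U + D + 2 <= K).
Local Notation a := (a_par K D U).
Local Notation u := (ua K D U).
Local Notation del := (Da K D U).
Local Notation Kr := (Ka K D U).
Local Notation N := (Ncode K D U).

Let a_gt0 : 0 < a. Proof. by rewrite !gcdn_gt0 ltn0Sn !orbT. Qed.
Let a_dvd_U1 : a %| U.+1. Proof. exact: dvdn_trans (dvdn_gcdr _ _) (dvdn_gcdr _ _). Qed.
Let a_dvd_DU : a %| D - U. Proof. exact: dvdn_trans (dvdn_gcdr _ _) (dvdn_gcdl _ _). Qed.
Let U1_eq : U.+1 = u * a. Proof. by rewrite divnK. Qed.
Let DU_eq : D - U = del * a. Proof. by rewrite divnK. Qed.
Let K_eq : K = Kr * a. Proof. by rewrite divnK ?dvdn_gcdl. Qed.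
Let le_del_u_Kr : del + u <= Kr.
Proof. by rewrite -(leq_pmul2r a_gt0) mulnDl -U1_eq -DU_eq -K_eq; lia. Qed.

Let u_gt0 : 0 < u. Proof. by rewrite -(ltn_pmul2r a_gt0) -U1_eq. Qed.
Let N_eq : N = Kr - del. Proof. by []. Qed.
Let N_gt0 : 0 < N. Proof. by lia. Qed.
Let N_le_Kr : N <= Kr. Proof. by rewrite leq_subr. Qed.
Let Kr_gt0 : 0 < Kr. Proof. by lia. Qed.

Lemma Ncode_mul : K - D + U = N * a.
Proof. by rewrite /Ncode mulnBl -DU_eq -K_eq; lia. Qed.

Definition code_row j l := (j %/ a + l) %% Kr.

Definition window_start k := (k %/ a + u + del) %% Kr.

Lemma L2s_mxvec_index (R : pzRingType) (j : 'I_K) (l : 'I_u) c :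
  L2s R K D U (mxvec_index j l) c = air_fun R Kr N (code_row j l) c.
Proof.
rewrite mxE mxvec_index_val /=; have [-> ->] := divn_modn_block j a_gt0 (ltn_ord l).
by rewrite air_entryE /air_fun; case: air.
Qed.

Lemma code_row_self k l : code_row k l = (window_start k + (Kr - del - u + l)) %% Kr.
Proof.
rewrite modnDml (_ : k %/ a + u + del + (Kr - del - u + l) = k %/ a + l + Kr) ?modnDr //.
by lia.
Qed.

Lemma code_row_nonside k j l : k < K -> j < K -> l < u -> j != k -> ~~ side K U D k j ->
  exists2 t, t < Kr - del - u & code_row j l = (window_start k + t) %% Kr.
Proof.
move=> lt_k lt_j lt_l j_neq_k /(nonside_offset le_UD_K lt_k lt_j j_neq_k).
set e := (j + K - k) %% K => /andP[lt_D_e lt_e].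
have ke_mod : (k + e) %% K = j.
  by rewrite modnDmr (_ : k + (j + K - k) = j + K) ?modnDr ?modn_small //; lia.
clearbody e.
have j_eq : k + e = (k + e) %/ K * Kr * a + j by rewrite -mulnA -K_eq -{1}ke_mod -divn_eq.
have ke_div : (k + e) %/ a = (k + e) %/ K * Kr + j %/ a by rewrite {1}j_eq divnMDl.
move: ke_div; rewrite {1}(divn_eq k a) -addnA divnMDl // => ke_div.
have lt_ka := ltn_pmod k a_gt0.
move: ((k %% a + e) %/ a) (leq_divRL (u + del) (k %% a + e) a_gt0)
  (ltn_divLR (k %% a + e) (Kr - u + 1) a_gt0) ke_div => f f_lo f_hi ke_div.
have {}f_lo : u + del <= f by rewrite f_lo mulnDl -U1_eq -DU_eq; move: le_U_D lt_D_e; clear; lia.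
have {}f_hi : f < Kr - u + 1.
  by rewrite f_hi mulnDl mulnBl -U1_eq -K_eq mul1n; move: lt_ka lt_e le_UD_K; clear; lia.
exists (f - u - del + l); first by move: f_lo f_hi lt_l; clear; lia.
rewrite /code_row /window_start modnDml.
rewrite (_ : k %/ a + u + del + (f - u - del + l) = k %/ a + f + l); last by move: f_lo; clear; lia.
by rewrite ke_div -addnA modnMDl.
Qed.

Lemma code_row_in_window (k j : 'I_K) (l : 'I_u) : ~~ side K U D k j ->
  code_row j l \in cyc_window Kr N (window_start k).
Proof.
move=> nonside_j; have lt_l := ltn_ord l.
case: (eqVneq j k) => [->|neq_jk]; first by rewrite code_row_self mem_cyc_window //; lia.
have [t lt_t ->] := code_row_nonside (ltn_ord k) (ltn_ord j) lt_l neq_jk nonside_j.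
by rewrite mem_cyc_window //; lia.
Qed.

Lemma code_row_eq_self (k j : 'I_K) (l l0 : 'I_u) : ~~ side K U D k j ->
  code_row j l = code_row k l0 -> (j, l) = (k, l0).
Proof.
move=> nonside_j /eqP; rewrite [code_row k _]code_row_self.
have lt_l := ltn_ord l; have lt_l0 := ltn_ord l0.
case: (eqVneq j k) => [->|neq_jk].
  by rewrite code_row_self eqn_modDl_small ?eqn_add2l; [move/eqP/val_inj ->|lia..].
have [t lt_t ->] := code_row_nonside (ltn_ord k) (ltn_ord j) lt_l neq_jk nonside_j.
by rewrite eqn_modDl_small; lia.
Qed.

Lemma L2s_kernel_row (R : pzRingType) (k : 'I_K) (Y : 'M[R]_(K, u)) :
  (mxvec Y *m L2s R K D U = 0 -> side_info U D k Y = 0 -> row k Y = 0)%R.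
Proof.
move=> Y_ker Y_side; apply/rowP => l0; rewrite !mxE.
have [free_rows _] := (air_free_blocks R N_gt0 N_le_Kr).1 (window_start k) (ltn_pmod _ Kr_gt0).
have Y_side_eq0 (j : 'I_K) (l : 'I_u) : side K U D k j -> Y j l = 0%R.
  by move=> side_j; have := congr1 (fun M : 'M[R]_(K, u) => M j l) Y_side; rewrite !mxE side_j.
apply: (rows_free_collect (rho := fun i : 'I_K * 'I_u => code_row i.1 i.2)
          (y := fun i => Y i.1 i.2) (i0 := (k, l0)) (uniq_cyc_window _ N_le_Kr) free_rows).
- by move=> [j l] /= notin; apply/Y_side_eq0/(contraR (@code_row_in_window k j l) notin).
- move=> [j l] /= neq_i eq_rows; have [/Y_side_eq0 //|nonside_j] := boolP (side K U D k j).
  by rewrite (code_row_eq_self nonside_j eq_rows) eqxx in neq_i.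
- by rewrite /= code_row_self mem_cyc_window //; have := ltn_ord l0; lia.
- move=> c; rewrite mem_iota => /andP[_ lt_c].
  transitivity ((mxvec Y *m L2s R K D U)%R ord0 (Ordinal lt_c)); last by rewrite Y_ker mxE.
  by rewrite mxvec_mulmx_entry; apply: eq_bigr => -[j l] _; rewrite L2s_mxvec_index.
Qed.

Lemma code_rate : ((u%:R / N%:R)%R = (U.+1%:R / (K - D + U)%:R)%R :> rat).
Proof.
rewrite U1_eq Ncode_mul !natrM -mulf_div divff ?mulr1 //.
by rewrite pnatr_eq0 -lt0n.
Qed.

End Code.

Lemma decodable_of_kernel (R : finPzRingType) K U D p N (L : 'M[R]_(K * p, N)) (k : 'I_K) :
  (forall X : 'M[R]_(K, p), mxvec X *m L = 0 -> side_info U D k X = 0 -> row k X = 0)%R ->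
  decodable U D L k.
Proof.
move=> kerL.
exists (fun y S => if [pick X | (mxvec X *m L == y) && (side_info U D k X == S)]%R is Some X
                   then row k X else 0%R) => X.
case: pickP => [X' /andP[/eqP eq_code /eqP eq_side]|no_X]; last by have := no_X X; rewrite !eqxx.
apply/eqP; rewrite -subr_eq0 -linearB; apply/eqP/kerL.
  by rewrite linearB mulmxBl eq_code subrr.
apply/matrixP => j l; have := congr1 (fun M : 'M[R]_(K, p) => M j l) eq_side.
by rewrite !mxE; case: side => // ->; rewrite subrr.
Qed.

Theorem lemma2 (F : finFieldType) (K D U : nat) :
  U <= D -> U + D + 2 <= K ->
  (forall k : 'I_K, decodable U D (L2s F K D U) k) /\
  (((ua K D U)%:R / (Ncode K D U)%:R)%R = ((U.+1)%:R / (K - D + U)%:R)%R :> rat).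
Proof.
move=> le_U_D le_UD_K; split; last exact: code_rate.
by move=> k; apply: decodable_of_kernel => X; apply: L2s_kernel_row.
Qed.
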